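(* Let $n,k$ be integers with $8\le 2k\le n-2$, let $\eta=(\eta_1<\dots<\eta_l)\in\mathbb{D}_k$, and let $Y_{2\eta^*}$ be the Young diagram whose main diagonal consists of exactly the cells $c_{1,1},\dots,c_{l+1,l+1}$ and which satisfies $h_{1,1}=2n-4$, $h_{i,i}=2\eta_{l-(i-2)}$ for $2\le i\le l+1$, and $a(c_{i,i})=l(c_{i,i})+1$ for $1\le i\le l+1$. Let $\lambda$ be the partition whose parts are the hook lengths of the first-column cells of $Y_{2\eta^*}$. Then $\lambda$ is a partition of $T_{n,n-2k+1}=n(n+1)/2-(n-2k+1)$.
   Context: $\mathbb{D}_N$ is the set of partitions of $N$ into distinct parts, i.e. sequences $(\eta_1<\dots<\eta_l)$ of positive integers with sum $N$ and $l\ge 2$. Young diagrams are in English convention: rows top to bottom, columns left to right, $c_{i,j}$ the cell in row $i$, column $j$; arm $a(c_{i,j})$ = number of cells to its right in its row, leg $l(c_{i,j})$ = number of cells below it in its column, hook length $h_{i,j}=a+l+1$. *)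

From mathcomp Require Import all_boot.
Set Implicit Arguments. Unset Strict Implicit. Unset Printing Implicit Defensive.

(* A Young diagram is represented by its sequence of row lengths
   p = [:: p_1; p_2; ...] (English convention, rows top to bottom).
   Rows and columns are indexed from 1, as in the paper. *)
Definition is_partition (p : seq nat) : bool :=
  sorted geq p && all (fun x => 0 < x) p.

Definition rowlen (p : seq nat) (i : nat) : nat := nth 0 p i.-1.

Definition in_diag (p : seq nat) (i j : nat) : bool :=
  (1 <= i <= size p) && (1 <= j <= rowlen p i).

Definition arm (p : seq nat) (i j : nat) : nat := rowlen p i - j.

Definition leg (p : seq nat) (i j : nat) : nat :=
  count (fun r => j <= r) (drop i p).

Definition hook (p : seq nat) (i j : nat) : nat := arm p i j + leg p i j + 1.

Definition first_col_hooks (p : seq nat) : seq nat :=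
  [seq hook p i 1 | i <- iota 1 (size p)].

Definition distinct_part (N : nat) (eta : seq nat) : bool :=
  [&& sorted ltn eta, all (fun x => 0 < x) eta, sumn eta == N & 2 <= size eta].

Definition epart (eta : seq nat) (j : nat) : nat := nth 0 eta j.-1.

Definition is_partition_of (N : nat) (lam : seq nat) : bool :=
  is_partition lam && (sumn lam == N).

Definition Tnm (n m : nat) : nat := n * (n + 1) %/ 2 - m.

From mathcomp Require Import all_boot zify.

Set Implicit Arguments.
Unset Strict Implicit.
Unset Printing Implicit Defensive.

(* A diagram's size is the sum of its diagonal hook lengths: removing the hook
   of c_{1,1} leaves a diagram whose diagonal hooks are the remaining ones.
   Hence |Y| = (2n - 4) + 2|eta|.  Since a(c_{1,1}) = l(c_{1,1}) + 1, the hook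
   h_{1,1} is twice the number of rows, so Y has n - 2 rows.  The first-column
   hook of row i is Y_i + (n - 2 - i): these strictly decrease and add up to
   |Y| + C(n - 2, 2), which is T_{n, n-2k+1}. *)

Definition drop_hook11 (p : seq nat) : seq nat := map predn (behead p).

Lemma nth_drop_hook11 p j : nth 0 (drop_hook11 p) j = (nth 0 p j.+1).-1.
Proof.
case: p => [|x s]; first by rewrite !nth_nil.
by rewrite /drop_hook11 /=; elim: s j => [|y s IH] [|j] //=; rewrite nth_nil.
Qed.

Lemma sorted_drop_hook11 p : sorted geq p -> sorted geq (drop_hook11 p).
Proof.
case: p => [|x s] //= /path_sorted; apply: homo_sorted => a b.
by rewrite /geq; lia.
Qed.

Lemma in_diag_drop_hook11 p i : 0 < i -> in_diag (drop_hook11 p) i i = in_diag p i.+1 i.+1.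
Proof.
case: i => [|i] // _; rewrite /in_diag /rowlen /= nth_drop_hook11 size_map size_behead.
by rewrite !ltn_predRL.
Qed.

Lemma hook_drop_hook11 p i : 0 < i -> hook (drop_hook11 p) i i = hook p i.+1 i.+1.
Proof.
case: i => [|i] // _; rewrite /hook /arm /leg /rowlen /= nth_drop_hook11.
rewrite /drop_hook11 -map_drop count_map -drop1 drop_drop.
rewrite (eq_count (a2 := fun r => i.+2 <= r)); last by move=> r /=; rewrite -ltn_predRL.
by rewrite (addn1 i.+1); lia.
Qed.

Lemma sumn_drop_hook11 p : in_diag p 1 1 -> sumn p = hook p 1 1 + sumn (drop_hook11 p).
Proof.
case: p => [|x s]; rewrite /in_diag /hook /arm /leg /rowlen /drop_hook11 //= drop0 => x_gt0.
suff -> : sumn s = count (fun r => 1 <= r) s + sumn (map predn s) by lia.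
by elim: s => [|[|y] s IH] //=; rewrite IH; lia.
Qed.

Lemma sumn_no_corner p : sorted geq p -> ~~ in_diag p 1 1 -> sumn p = 0.
Proof.
case: p => [|[|x] s] //= sorted_p _; move: sorted_p; rewrite add0n.
by elim: s => [|y s IH] //= /andP[]; rewrite leqn0 => /eqP-> /IH.
Qed.

Lemma sumn_diag_hooks d p : sorted geq p ->
  (forall i, in_diag p i i = (1 <= i <= d)) ->
  sumn p = \sum_(1 <= i < d.+1) hook p i i.
Proof.
elim: d p => [|d IH] p sorted_p diag_p.
  by rewrite big_geq // sumn_no_corner // diag_p.
have corner : in_diag p 1 1 by rewrite diag_p.
have diag_drop_hook11 i : in_diag (drop_hook11 p) i i = (1 <= i <= d).
  by case: i => [|i]; rewrite // in_diag_drop_hook11 // diag_p.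
rewrite sumn_drop_hook11 // (IH _ (sorted_drop_hook11 sorted_p) diag_drop_hook11) [RHS]big_nat_recl //.
by congr (_ + _); apply: eq_big_nat => i /andP[i_gt0 _]; apply: hook_drop_hook11.
Qed.

Section FirstColumn.

Variable p : seq nat.
Hypothesis p_pos : all (fun x => 0 < x) p.

Lemma leg_first_col i : leg p i 1 = size p - i.
Proof.
rewrite /leg (eq_in_count (a2 := predT)) ?count_predT ?size_drop //.
by move=> x /mem_drop /(allP p_pos).
Qed.

Lemma hook_first_col i : i < size p -> hook p i.+1 1 = nth 0 p i + (size p - i.+1).
Proof.
move=> i_lt; have := allP p_pos _ (mem_nth 0 i_lt).
by rewrite /hook /arm /rowlen leg_first_col /=; lia.
Qed.

Lemma sumn_first_col_hooks : sumn (first_col_hooks p) = sumn p + 'C(size p, 2).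
Proof.
rewrite /first_col_hooks.
have -> : iota 1 (size p) = index_iota 1 (size p).+1 by rewrite /index_iota subn1.
rewrite sumnE big_map big_add1 /=.
rewrite (eq_big_nat _ _ (fun i i_lt => hook_first_col (andP i_lt).2)) big_split /=.
congr (_ + _); first by rewrite [RHS]sumnE [RHS](big_nth 0).
rewrite -bin2_sum big_nat_rev; apply: eq_big_nat => i /andP[_ i_lt]; lia.
Qed.

Lemma nth_first_col_hooks i : i < size p ->
  nth 0 (first_col_hooks p) i = nth 0 p i + (size p - i.+1).
Proof.
move=> i_lt; rewrite /first_col_hooks (nth_map 0) ?size_iota //.
by rewrite nth_iota // add1n hook_first_col.
Qed.

Lemma is_partition_first_col_hooks : sorted geq p -> is_partition (first_col_hooks p).
Proof.
move=> sorted_p; apply/andP; split; last first.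
  by apply/allP => h /mapP[i _ ->]; rewrite /hook addn1.
apply/(sortedP 0) => i; rewrite size_map size_iota => i_lt.
have := sortedP 0 sorted_p i i_lt.
by rewrite !nth_first_col_hooks // ?(ltnW i_lt) /geq; lia.
Qed.

Lemma hook11_balanced : arm p 1 1 = leg p 1 1 + 1 -> hook p 1 1 = 2 * size p.
Proof.
rewrite /hook leg_first_col; case: (posnP (size p)) => [/size0nil p_nil | p_ne0].
  by rewrite /arm /rowlen p_nil.
by move=> ->; lia.
Qed.

End FirstColumn.

Lemma sum_epart_rev s : \sum_(1 <= i < (size s).+1) epart s (size s - i.-1) = sumn s.
Proof.
rewrite big_add1 big_nat_rev [RHS]sumnE [RHS](big_nth 0) /=.
by apply: eq_big_nat => i /andP[_ i_lt]; rewrite /epart; congr nth; lia.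
Qed.

Lemma Tnm_n_sub2k1E n k : 2 * k <= n - 2 ->
  Tnm n (n - 2 * k + 1) = 2 * n - 4 + 2 * k + 'C(n - 2, 2).
Proof.
move=> k_le; case: (ltnP n 2) => [n_lt2 | n_ge2].
  have -> : k = 0 by lia.
  by case: n n_lt2 {k_le} => [|[|]].
have [m n_eq] : exists m, n = m.+2 by exists (n - 2); lia.
have -> : n - 2 = m by lia.
have -> : Tnm n (n - 2 * k + 1) = 'C(m.+3, 2) - (m.+3 - 2 * k).
  by rewrite /Tnm bin2 divn2 n_eq mulnC addn1; congr (_ - _); lia.
rewrite !binS !bin1 !bin0; lia.
Qed.

Theorem proposition5p2 (n k : nat) (eta : seq nat) (Y : seq nat) :
  8 <= 2 * k -> 2 * k <= n - 2 ->
  distinct_part k eta ->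
  is_partition Y ->
  (* the main diagonal of Y consists exactly of c_{1,1}, ..., c_{l+1,l+1} *)
  (forall i, in_diag Y i i = (1 <= i <= (size eta).+1)) ->
  hook Y 1 1 = 2 * n - 4 ->
  (forall i, 2 <= i <= (size eta).+1 ->
     hook Y i i = 2 * epart eta (size eta - (i - 2))) ->
  (forall i, 1 <= i <= (size eta).+1 -> arm Y i i = leg Y i i + 1) ->
  is_partition_of (Tnm n (n - 2 * k + 1)) (first_col_hooks Y).
Proof.
(* Of the hypotheses on k and eta only 2k <= n - 2 and the sum of eta matter. *)
move=> _ k_le /and4P[_ _ /eqP sum_eta _] /andP[sorted_Y Y_pos] diag_Y hook11 hook_diag balanced.
have size_Y : size Y = n - 2.
  by move: hook11; rewrite hook11_balanced ?balanced //; lia.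
have sum_Y : sumn Y = 2 * n - 4 + 2 * k.
  rewrite (sumn_diag_hooks sorted_Y diag_Y) big_nat_recl // hook11.
  rewrite -sum_eta -sum_epart_rev big_distrr /=; congr (_ + _).
  apply: eq_big_nat => i /andP[i_gt0 i_lt].
  by rewrite hook_diag; [congr (2 * epart _ _); lia | lia].
rewrite /is_partition_of is_partition_first_col_hooks //.
by rewrite sumn_first_col_hooks // sum_Y size_Y Tnm_n_sub2k1E ?eqxx.
Qed.
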